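(* Let $k\ge 2$ and $\ell\ge 3$ be integers, and let $\Theta(k,\ell)$ be the graph consisting of two vertices $A$ and $B$ joined by $k$ internally vertex-disjoint paths, each of length $\ell$. Then $\mathrm{gp}(\Theta(k,\ell)) = k+1$.
   Context: All graphs are finite, simple and connected. A geodesic is a shortest path between its end-vertices. A set $S$ of vertices of a graph $G$ is a general position set if no three vertices of $S$ lie on a common geodesic of $G$ (i.e., there are no distinct $x,y,z\in S$ with $d_G(x,z)=d_G(x,y)+d_G(y,z)$). The general position number $\mathrm{gp}(G)$ is the maximum cardinality of a general position set of $G$. *)

From mathcomp Require Import all_boot.
Set Implicit Arguments. Unset Strict Implicit. Unset Printing Implicit Defensive.

Section Graph.
Variables (T : finType) (e : rel T).

Fixpoint ballg (n : nat) (x : T) : {set T} :=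
  match n with
  | 0 => [set x]
  | n'.+1 => ballg n' x :|: [set y | [exists z in ballg n' x, e z y]]
  end.

(* shortest-path distance: least n with y within n steps of x
   (for connected graphs on T this is always < #|T|; unreachable -> #|T|) *)
Definition gdist (x y : T) : nat := find (fun n => y \in ballg n x) (iota 0 #|T|).

Definition gp_set (S : {set T}) : bool :=
  [forall x in S, forall y in S, forall z in S,
     [&& x != y, y != z & x != z] ==> (gdist x z != gdist x y + gdist y z)].

Definition gp : nat := \max_(S : {set T} | gp_set S) #|S|.
End Graph.

(* Theta(k,l): vertices A = inl false, B = inl true, and for path i < k the
   internal vertex at distance j+1 from A is inr (i, j), j < l-1. *)
Definition theta_V (k l : nat) : finType := (bool + ('I_k * 'I_l.-1))%type.

Definition theta_adj (k l : nat) : rel (theta_V k l) :=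
  fun x y =>
  match x, y with
  | inl a, inr (i, j) | inr (i, j), inl a => if a then (nat_of_ord j).+2 == l else nat_of_ord j == 0
  | inr (i, j), inr (i', j') => (i == i') && (((nat_of_ord j).+1 == nat_of_ord j') || ((nat_of_ord j').+1 == nat_of_ord j))
  | inl _, inl _ => false
  end.

From mathcomp Require Import all_boot zify.
Set Implicit Arguments. Unset Strict Implicit. Unset Printing Implicit Defensive.

(* Distances in Θ(k, ℓ) are explicit. Measure the position of a vertex by its
   distance from A along its path; two vertices on a common path (A and B lie on
   all of them) are at distance |p - q|, two vertices on different paths at
   distance min(p + q, 2ℓ - p - q). So a general position set S contains no
   three vertices of one path, and no two interior vertices from each of two
   different paths: for x1 < x2 on one and y1 < y2 on the other, the geodesic
   from x1 to y2 runs through x2 or through y1. Hence, apart from one vertex, S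
   meets each path interior at most once and |S| <= k + 1. Conversely B together
   with the k neighbours of A is in general position as soon as ℓ >= 3. *)

Section GraphDistance.
Variables (T : finType) (e : rel T) (d : T -> T -> nat) (x : T).
Hypotheses (d_refl : d x x = 0)
  (d_adj : forall z y, e z y -> d x y <= (d x z).+1)
  (d_pred : forall y, y != x -> exists2 z, e z y & (d x z).+1 = d x y).

Lemma mem_ballg n y : (y \in ballg e n x) = (d x y <= n).
Proof.
elim: n y => [|n IHn] y /=.
  rewrite inE leqn0; case: eqP => [->|/eqP ne_yx]; first by rewrite d_refl.
  by have [z _ <-] := d_pred ne_yx.
rewrite !inE IHn; apply/orP/idP => [[|/existsP[z /andP[]]]|le_yn]; first lia.
  by rewrite IHn => le_zn /d_adj; lia.
have [le_yn' | lt_ny] := leqP (d x y) n; first by left.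
have ne_yx : y != x by apply: contraTneq lt_ny => ->; rewrite d_refl.
have [z e_zy dz] := d_pred ne_yx.
by right; apply/existsP; exists z; rewrite IHn e_zy; lia.
Qed.

Lemma gdist_eq y : d x y < #|T| -> gdist e x y = d x y.
Proof.
move=> lt_dT; rewrite /gdist -(subnKC lt_dT) addSnnS iotaD find_cat size_iota /=.
rewrite (_ : has _ _ = false) ?mem_ballg ?leqnn ?addn0 //.
by apply/hasPn => i; rewrite mem_iota mem_ballg; lia.
Qed.

End GraphDistance.

Lemma gp_set_not_between (T : finType) (e : rel T) (S : {set T}) x y z :
  gp_set e S -> x \in S -> y \in S -> z \in S -> x != y -> y != z -> x != z ->
  gdist e x z != gdist e x y + gdist e y z.
Proof.
move=> /forall_inP/(_ x) gpS Sx Sy Sz nxy nyz nxz.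
have /forall_inP/(_ y Sy)/forall_inP/(_ z Sz)/implyP := gpS Sx.
by apply; rewrite nxy nyz nxz.
Qed.

(* Positions p1 < p2 on one path and q1 < q2 on another: the geodesic from p1
   to q2 passes through p2 (and B) or through q1 (and A). *)
Lemma route_through_A_or_B L p1 p2 q1 q2 : p1 < p2 <= L -> q1 < q2 <= L ->
  minn (p1 + q2) (2 * L - p1 - q2) = p1 - p2 + (p2 - p1) + minn (p2 + q2) (2 * L - p2 - q2) \/
  minn (q2 + p1) (2 * L - q2 - p1) = q2 - q1 + (q1 - q2) + minn (q1 + p1) (2 * L - q1 - p1).
Proof. by case: (leqP (p1 + q2) L) => ?; [right | left]; lia. Qed.

(* Θ(k+1, l+2): the distance formula needs at least one path and A, B nonadjacent. *)
Section Theta.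
Variables k l : nat.
Local Notation V := (theta_V k.+1 l.+2).
Local Notation adj := (@theta_adj k.+1 l.+2).
Local Notation L := l.+2.
Local Notation A := (inl false : V).
Local Notation B := (inl true : V).

Definition pos (x : V) : nat :=
  match x with inl b => if b then L else 0 | inr (_, j) => j.+1 end.

Definition path_of (x : V) : option 'I_k.+1 :=
  if x is inr (i, _) then Some i else None.

Definition on_path (i : 'I_k.+1) (x : V) : bool :=
  if x is inr (i', _) then i' == i else true.

Definition vertex (i : 'I_k.+1) (p : nat) : V :=
  if p is p'.+1 then if p' < l.+1 then inr (i, inord p') else B else A.

(* Between different paths a geodesic passes through A or through B. *)
Definition dist (x y : V) : nat :=
  match x, y with
  | inr (i, _), inr (i', _) =>
      if i == i' then pos x - pos y + (pos y - pos x)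
      else minn (pos x + pos y) (2 * L - pos x - pos y)
  | _, _ => pos x - pos y + (pos y - pos x)
  end.

Lemma pos_le x : pos x <= L.
Proof. by case: x => [[]|[i j]] //=; rewrite ltnS ltnW. Qed.

Lemma pos_off_path i x : ~~ on_path i x -> 0 < pos x < L.
Proof. by case: x => [|[i' j]] //= _; rewrite ltnS. Qed.

Lemma on_path_exists x : exists i, on_path i x.
Proof. by case: x => [b|[i j]]; [exists ord0 | exists i => /=]. Qed.

Lemma on_path_vertex i p : on_path i (vertex i p).
Proof. by case: p => [|p] //=; case: ifP; rewrite //= eqxx. Qed.

Lemma pos_vertex i p : pos (vertex i p) = minn p L.
Proof.
case: p => [|p] //=; case: ifP => [lt_pl|]; rewrite /= ?inordK //; lia.
Qed.

Lemma vertex_pos i x : on_path i x -> vertex i (pos x) = x.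
Proof.
case: x => [[]|[i' j]] //=; first by rewrite ltnn.
by move=> /eqP->; rewrite ltn_ord; congr (inr (_, _)); apply: val_inj; rewrite /= inordK.
Qed.

Lemma on_path_pos_inj i x y : on_path i x -> on_path i y -> pos x = pos y -> x = y.
Proof. by move=> ix iy eq_pos; rewrite -(vertex_pos ix) eq_pos vertex_pos. Qed.

Lemma on_path_of i x : path_of x = Some i -> on_path i x.
Proof. by case: x => [|[i' j]] //= [->]. Qed.

Lemma on_path_endpoint i x : path_of x = None -> on_path i x.
Proof. by case: x => [|[]]. Qed.

Lemma on_path_pos_neq i x y : on_path i x -> on_path i y -> x != y -> pos x != pos y.
Proof. by move=> xi yi; apply: contraNneq => /(on_path_pos_inj xi yi)->. Qed.

Lemma dist_on_path i x y : on_path i x -> on_path i y ->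
  dist x y = pos x - pos y + (pos y - pos x).
Proof. by case: x => [a|[i1 j1]]; case: y => [b|[i2 j2]] //= /eqP-> /eqP->; rewrite eqxx. Qed.

Lemma dist_cross i i' x y : on_path i x -> on_path i' y -> i != i' ->
  dist x y = minn (pos x + pos y) (2 * L - pos x - pos y).
Proof.
case: x => [a|[i1 j1]]; case: y => [b|[i2 j2]] /=.
- by case: a; case: b => /=; lia.
- by case: a => /= _ _ _; have /= := ltn_ord j2; lia.
- by case: b => /= _ _ _; have /= := ltn_ord j1; lia.
- by move=> /eqP-> /eqP-> ne_ii'; rewrite (negPf ne_ii').
Qed.

Lemma dist_le x y : dist x y <= L.
Proof.
have [i xi] := on_path_exists x; have [i' yi'] := on_path_exists y.
have := pos_le x; have := pos_le y.
case: (eqVneq i i') yi' => [<- yi|ne_ii' yi']; first by rewrite (dist_on_path xi yi); lia.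
by rewrite (dist_cross xi yi' ne_ii'); lia.
Qed.

Lemma adj_sym : symmetric adj.
Proof. by move=> [a|[i1 j1]] [b|[i2 j2]] //=; rewrite 1?eq_sym 1?orbC. Qed.

Lemma adj_on_path z y : adj z y ->
  exists i, [/\ on_path i z, on_path i y & (pos y = (pos z).+1 \/ pos z = (pos y).+1)].
Proof.
case: z => [a|[i1 j1]]; case: y => [b|[i2 j2]] //=.
- by move=> adj_ay; exists i2; split=> //; case: a adj_ay => /eqP; lia.
- by move=> adj_yb; exists i1; split=> //; case: b adj_yb => /eqP; lia.
- by case/andP=> /eqP<- adj_j; exists i1; split=> //; lia.
Qed.

Lemma adj_vertexS i p : p < L -> adj (vertex i p) (vertex i p.+1).
Proof.
case: p => [|p] /= lt_pL; first by rewrite inordK.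
rewrite -ltnS lt_pL; case: ifP => /= [lt_Spl|]; rewrite !inordK ?eqxx //; lia.
Qed.

Lemma adj_vertex_pred i y : on_path i y -> 0 < pos y -> adj (vertex i (pos y).-1) y.
Proof.
move=> yi py; rewrite -[X in adj _ X](vertex_pos yi) -{2}(prednK py).
by apply: adj_vertexS; have := pos_le y; lia.
Qed.

Lemma adj_vertex_succ i y : on_path i y -> pos y < L -> adj (vertex i (pos y).+1) y.
Proof. by move=> yi py; rewrite adj_sym -[X in adj X](vertex_pos yi) adj_vertexS. Qed.

Lemma dist_adj x z y : adj z y -> dist x y <= (dist x z).+1.
Proof.
move=> /adj_on_path[i [zi yi step]]; have [i' xi'] := on_path_exists x.
have := pos_le x; have := pos_le y; have := pos_le z.
case: (eqVneq i' i) zi yi => [<- | ne_i'i] zi yi.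
  by rewrite (dist_on_path xi' zi) (dist_on_path xi' yi); lia.
by rewrite (dist_cross xi' zi ne_i'i) (dist_cross xi' yi ne_i'i); lia.
Qed.

Lemma dist_pred x y : y != x -> exists2 z, adj z y & (dist x z).+1 = dist x y.
Proof.
move=> ne_yx; have [i' xi'] := on_path_exists x.
have le_xL := pos_le x; have le_yL := pos_le y.
have [yi'|yNi'] := boolP (on_path i' y).
  rewrite (dist_on_path xi' yi').
  case: (ltngtP (pos x) (pos y)) (on_path_pos_neq yi' xi' ne_yx) => // [lt_xy|lt_yx] _.
    exists (vertex i' (pos y).-1); first by apply: adj_vertex_pred; last lia.
    by rewrite (dist_on_path xi' (on_path_vertex _ _)) pos_vertex; lia.
  exists (vertex i' (pos y).+1); first by apply: adj_vertex_succ; last lia.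
  by rewrite (dist_on_path xi' (on_path_vertex _ _)) pos_vertex; lia.
have [i yi] := on_path_exists y; have /andP[py0 pyL] := pos_off_path yNi'.
have ne_i'i : i' != i by apply: contraNneq yNi' => ->.
rewrite (dist_cross xi' yi ne_i'i); case: (leqP (pos x + pos y) L) => route.
  exists (vertex i (pos y).-1); first exact: adj_vertex_pred.
  by rewrite (dist_cross xi' (on_path_vertex _ _) ne_i'i) pos_vertex; lia.
exists (vertex i (pos y).+1); first exact: adj_vertex_succ.
by rewrite (dist_cross xi' (on_path_vertex _ _) ne_i'i) pos_vertex; lia.
Qed.

Lemma card_theta : #|V| = (k.+1 * l.+1).+2.
Proof. by rewrite card_sum card_bool card_prod !card_ord. Qed.

Lemma gdist_theta x y : gdist adj x y = dist x y.
Proof.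
apply: gdist_eq.
- by have [i xi] := on_path_exists x; rewrite (dist_on_path xi xi) subnn.
- exact: dist_adj.
- exact: dist_pred.
- by rewrite card_theta; apply: leq_ltn_trans (dist_le x y) _; nia.
Qed.

Lemma card_le_paths (S : {set V}) s0 :
  {in S, forall x, x != s0 -> path_of x != None} ->
  {in S &, forall x y, x != s0 -> y != s0 -> path_of x = path_of y -> x = y} ->
  #|S| <= k.+2.
Proof.
move=> interior inj; pose f x := if x == s0 then None else path_of x.
have f_inj : {in S &, injective f}.
  move=> x y Sx Sy; rewrite /f; case: eqVneq => [-> | nx]; case: eqVneq => [-> | ny] //.
  - by move=> eq_f; move: (interior y Sy ny); rewrite -eq_f.
  - by move=> eq_f; move: (interior x Sx nx); rewrite eq_f.
  - exact: inj.
rewrite -(card_in_imset f_inj); apply: leq_trans (max_card _) _.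
by rewrite card_option card_ord.
Qed.

Section GeneralPosition.
Variables (S : {set V}) (gpS : gp_set adj S).

Lemma gp_dist_not_between x y z : x \in S -> y \in S -> z \in S ->
  x != y -> y != z -> x != z -> dist x z != dist x y + dist y z.
Proof. by move=> *; rewrite -!gdist_theta (gp_set_not_between gpS). Qed.

Lemma gp_no_three_on_path i x y z : x \in S -> y \in S -> z \in S ->
  x != y -> y != z -> x != z -> on_path i x -> on_path i y -> ~~ on_path i z.
Proof.
move=> Sx Sy Sz nxy nyz nxz xi yi; apply/negP => zi.
have := on_path_pos_neq xi yi nxy; have := on_path_pos_neq yi zi nyz.
have := on_path_pos_neq xi zi nxz.
have nyx : y != x by rewrite eq_sym.
have nzy : z != y by rewrite eq_sym.
have := gp_dist_not_between Sx Sy Sz nxy nyz nxz.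
have := gp_dist_not_between Sy Sx Sz nyx nxz nyz.
have := gp_dist_not_between Sx Sz Sy nxz nzy nxy.
by rewrite !(dist_on_path (i := i)) //; lia.
Qed.

Lemma gp_no_two_pairs i i' x1 x2 y1 y2 : i != i' ->
  path_of x1 = Some i -> path_of x2 = Some i -> path_of y1 = Some i' -> path_of y2 = Some i' ->
  x1 \in S -> x2 \in S -> y1 \in S -> y2 \in S -> x1 != x2 -> y1 != y2 -> False.
Proof.
move=> ne_ii' px1 px2 py1 py2 Sx1 Sx2 Sy1 Sy2 nx ny.
have x1i := on_path_of px1; have x2i := on_path_of px2.
have y1i := on_path_of py1; have y2i := on_path_of py2.
wlog lt_x : x1 x2 px1 px2 Sx1 Sx2 nx x1i x2i / pos x1 < pos x2.
  move=> base; case: (ltngtP (pos x1) (pos x2)) (on_path_pos_neq x1i x2i nx) => // lt_x _.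
    exact: (base x1 x2).
  by apply: (base x2 x1) => //; rewrite eq_sym.
wlog lt_y : y1 y2 py1 py2 Sy1 Sy2 ny y1i y2i / pos y1 < pos y2.
  move=> base; case: (ltngtP (pos y1) (pos y2)) (on_path_pos_neq y1i y2i ny) => // lt_y _.
    exact: (base y1 y2).
  by apply: (base y2 y1) => //; rewrite eq_sym.
have neq_paths x y : path_of x = Some i -> path_of y = Some i' -> y != x.
  by move=> px py; apply: contraNneq ne_ii' => eq_yx; move: py; rewrite eq_yx px => -[->].
have nx1y2 : x1 != y2 by rewrite eq_sym neq_paths.
have nx2y2 : x2 != y2 by rewrite eq_sym neq_paths.
have ny2x1 : y2 != x1 by rewrite neq_paths.
have ny1x1 : y1 != x1 by rewrite neq_paths.
have ny2y1 : y2 != y1 by rewrite eq_sym.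
have ne_i'i : i' != i by rewrite eq_sym.
have le_x : pos x1 < pos x2 <= L by rewrite lt_x pos_le.
have le_y : pos y1 < pos y2 <= L by rewrite lt_y pos_le.
case: (route_through_A_or_B le_x le_y) => route.
  have := gp_dist_not_between Sx1 Sx2 Sy2 nx nx2y2 nx1y2.
  rewrite (dist_on_path x1i x2i) (dist_cross x1i y2i ne_ii') (dist_cross x2i y2i ne_ii').
  by rewrite route eqxx.
have := gp_dist_not_between Sy2 Sy1 Sx1 ny2y1 ny1x1 ny2x1.
rewrite (dist_on_path y2i y1i) (dist_cross y2i x1i ne_i'i) (dist_cross y1i x1i ne_i'i).
by rewrite route eqxx.
Qed.

Lemma gp_card_le_endpoint s0 : s0 \in S -> path_of s0 = None ->
  {in S, forall x, x != s0 -> path_of x != None} -> #|S| <= k.+2.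
Proof.
move=> Ss0 ps0 interior; apply: (card_le_paths interior) => x y Sx Sy nx ny pxy.
apply/eqP; apply: contraT => nxy.
case px : (path_of x) (interior x Sx nx) => [i|] // _.
have py : path_of y = Some i by rewrite -pxy.
have ns0x : s0 != x by rewrite eq_sym.
have ns0y : s0 != y by rewrite eq_sym.
have := gp_no_three_on_path Ss0 Sx Sy ns0x nxy ns0y (on_path_endpoint i ps0) (on_path_of px).
by rewrite (on_path_of py).
Qed.

Lemma gp_card_le_collision x y : x \in S -> y \in S -> x != y -> path_of x = path_of y ->
  {in S, forall z, path_of z != None} -> #|S| <= k.+2.
Proof.
move=> Sx Sy nxy pxy interior.
apply: (card_le_paths (s0 := x)) => [u Su _ | u v Su Sv nux nvx puv]; first exact: interior.
apply/eqP; apply: contraT => nuv.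
case pu : (path_of u) (interior u Su) => [i|] // _.
case px : (path_of x) (interior x Sx) => [i'|] // _.
have pv : path_of v = Some i by rewrite -puv.
have py : path_of y = Some i' by rewrite -pxy.
case: (eqVneq i i') px py => [<- | ne_ii'] px py.
  have nxu : x != u by rewrite eq_sym.
  have nxv : x != v by rewrite eq_sym.
  have := gp_no_three_on_path Sx Su Sv nxu nuv nxv (on_path_of px) (on_path_of pu).
  by rewrite (on_path_of pv).
by case: (gp_no_two_pairs ne_ii' pu pv px py Su Sv Sx Sy nuv nxy).
Qed.

Lemma gp_card_le : #|S| <= k.+2.
Proof.
have [SA|SNA] := boolP (A \in S); have [SB|SNB] := boolP (B \in S).
- have sub_AB : S \subset [set A; B].
    apply/subsetP => -[b|[i j]] Sx; rewrite !inE; first by case: b Sx.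
    have := gp_no_three_on_path (i := i) SA SB Sx isT isT isT isT isT.
    by rewrite /= eqxx.
  by apply: leq_trans (subset_leq_card sub_AB) _; rewrite cards2.
- by apply: gp_card_le_endpoint SA _ _ => // -[[] Sx|[]] //; rewrite Sx in SNB.
- by apply: gp_card_le_endpoint SB _ _ => // -[[] Sx|[]] //; rewrite Sx in SNA.
have interior : {in S, forall x, path_of x != None}.
  by move=> -[[]|[]] // Sx; [move: SNB | move: SNA]; rewrite Sx.
case: (boolP [exists x in S, exists y in S, (x != y) && (path_of x == path_of y)]).
  case/exists_inP=> x Sx /exists_inP[y Sy /andP[nxy /eqP pxy]].
  exact: (gp_card_le_collision Sx Sy nxy pxy).
rewrite negb_exists_in => /forall_inP no_collision.
apply: (card_le_paths (s0 := A)) => [x Sx _ | x y Sx Sy _ _ pxy]; first exact: interior.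
apply/eqP; apply: contraT => nxy; move: (no_collision x Sx); rewrite negb_exists_in.
by move=> /forall_inP/(_ y Sy); rewrite nxy pxy eqxx.
Qed.

End GeneralPosition.

Definition witness : {set V} := B |: [set inr (i, ord0) | i : 'I_k.+1].

Lemma dist_witness x y : x \in witness -> y \in witness -> x != y ->
  dist x y = if (x == B) || (y == B) then l.+1 else 2.
Proof.
rewrite !inE => /predU1P[->|/imsetP[i _ ->]] /predU1P[->|/imsetP[i' _ ->]] //= => [_|]; first lia.
by case: (eqVneq i i') => [-> | _ _]; [rewrite eqxx | lia].
Qed.

Lemma gp_set_witness : 0 < l -> gp_set adj witness.
Proof.
move=> l_gt0; apply/forall_inP => x Sx; apply/forall_inP => y Sy; apply/forall_inP => z Sz.
apply/implyP => /and3P[nxy nyz nxz]; rewrite !gdist_theta !dist_witness //.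
move: Sx Sy Sz nxy nyz nxz; rewrite !inE.
by do 3!case/predU1P=> [->|/imsetP[? _ ->]]; rewrite ?eqxx //=; lia.
Qed.

Lemma card_witness : #|witness| = k.+2.
Proof.
rewrite cardsU1 card_imset ?card_ord; last by move=> i j [].
by case: imsetP => // -[].
Qed.

End Theta.

Theorem proposition2p1 (k l : nat) :
  2 <= k -> 3 <= l -> gp (@theta_adj k l) = k.+1.
Proof.
case: k => [|[|k]] // _; case: l => [|[|[|l]]] // _.
apply/eqP; rewrite eqn_leq /gp; apply/andP; split.
  by apply/bigmax_leqP => S; apply: gp_card_le.
by rewrite -(card_witness k.+1 l.+1) (leq_bigmax_cond _ (gp_set_witness _ _)).
Qed.
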